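(* Let $M$ be a transitive monoid of binary relations on a finite nonempty set $Q$. Then the set $K$ of elements of $M$ of rank $r(M)$ is a regular $\mathcal D$-class of $M$. The groups $G_e$, for $e$ an idempotent in $K$, are equivalent transitive permutation groups. Moreover, for an idempotent $e\in K$ and a fixed point $i$ of $e$, $r(M)$ equals the index in $H(e)$ of the subgroup $\{m\in H(e)\mid (i,i)\in m\}$.
   Context: Monoid of relations: set of relations on $Q$ containing the identity and closed under composition $mn=\{(p,q)\mid\exists r,(p,r)\in m,(r,q)\in n\}$. It is transitive if for all $p,q\in Q$ some $m\in M$ has $(p,q)\in m$. The rank of a relation $m$ on $Q$ is the least cardinality of a set $R$ such that $m=uv$ with $u\subseteq Q\times R$, $v\subseteq R\times Q$ (Boolean rank). The minimal rank $r(M)$ is the minimum rank of the nonempty elements of $M$. A $\mathcal D$-class is regular if it contains an idempotent. For an idempotent $e$, $H(e)$ is its $\mathcal H$-class (a group, inverses $m^{-1}$), $\Gamma_e$ the set of strongly connected components of the restriction of $e$ to its fixed points $\{q\mid (q,q)\in e\}$, $\gamma_e(m)=\{(\rho,\sigma)\in\Gamma_e^2\mid (r,s)\in m,(s,r)\in m^{-1}\text{ for some }r\in\rho,s\in\sigma\}$ for $m\in H(e)$, and $G_e=\gamma_e(H(e))$, a permutation group on $\Gamma_e$. Permutation groups $G$ on $S$ and $G'$ on $S'$ are equivalent if there exist a bijection $\theta:S\to S'$ and an isomorphism $\alpha:G\to G'$ with $\theta(g(s))=\alpha(g)(\theta(s))$. *)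

From mathcomp Require Import all_boot.
Set Implicit Arguments. Unset Strict Implicit. Unset Printing Implicit Defensive.

Definition relc {A B C : finType} (u : {set A * B}) (v : {set B * C})
  : {set A * C} :=
  [set p | [exists b : B, ((p.1, b) \in u) && ((b, p.2) \in v)]].

Definition idrel (Q : finType) : {set Q * Q} := [set p | p.1 == p.2].

Definition is_rel_monoid (Q : finType) (M : {set {set Q * Q}}) : Prop :=
  idrel Q \in M /\ (forall m n, m \in M -> n \in M -> relc m n \in M).

Definition transitive_relmon (Q : finType) (M : {set {set Q * Q}}) : Prop :=
  forall p q : Q, exists2 m, m \in M & (p, q) \in m.

(* Boolean rank: rank m <= k iff m = uv with u ⊆ Q x R, v ⊆ R x Q, |R| = k
   (only the cardinality of R matters, so R = 'I_k). *)
Definition rank_le (Q : finType) (m : {set Q * Q}) (k : nat) : bool :=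
  [exists u : {set Q * 'I_k}, [exists v : {set 'I_k * Q}, m == relc u v]].

Lemma rank_le_exists (Q : finType) (m : {set Q * Q}) : exists k, rank_le m k.
Proof.
exists #|Q|; apply/existsP.
exists [set p : Q * 'I_#|Q| | [exists y, (enum_rank y == p.2) && ((p.1, y) \in m)]].
apply/existsP; exists [set p : 'I_#|Q| * Q | enum_rank p.2 == p.1].
apply/eqP/setP => [[x y]]; rewrite !inE /=; apply/idP/existsP.
  by move=> Hxy; exists (enum_rank y); rewrite !inE eqxx andbT; apply/existsP; exists y; rewrite eqxx.
move=> [b]; rewrite !inE /= => /andP[/existsP[z /andP[/eqP Hz Hxz]] /eqP Hy].
by move: Hy; rewrite -Hz => /enum_rank_inj ->.
Qed.

Definition rank (Q : finType) (m : {set Q * Q}) : nat :=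
  ex_minn (rank_le_exists m).

(* minimal rank r(M): minimum rank of the nonempty elements of M
   (the default value #|Q| is irrelevant when M has a nonempty element,
   e.g. when M is transitive and Q nonempty) *)
Definition minrank (Q : finType) (M : {set {set Q * Q}}) : nat :=
  \big[minn/#|Q|]_(m in M | m != set0) rank m.

Definition Kset (Q : finType) (M : {set {set Q * Q}}) : {set {set Q * Q}} :=
  [set m in M | rank m == minrank M].

(* Green's relations in M (M contains 1, so M^1 = M) *)
Definition Rrel (Q : finType) (M : {set {set Q * Q}}) (m n : {set Q * Q}) : bool :=
  [exists a in M, [exists b in M, (m == relc n a) && (n == relc m b)]].
Definition Lrel (Q : finType) (M : {set {set Q * Q}}) (m n : {set Q * Q}) : bool :=
  [exists a in M, [exists b in M, (m == relc a n) && (n == relc b m)]].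
Definition Drel (Q : finType) (M : {set {set Q * Q}}) (m n : {set Q * Q}) : bool :=
  [exists p in M, Lrel M m p && Rrel M p n].

Definition is_Dclass (Q : finType) (M K : {set {set Q * Q}}) : Prop :=
  exists2 m, m \in M & K = [set n in M | Drel M m n].

Definition idem_rel (Q : finType) (e : {set Q * Q}) : bool := relc e e == e.

Definition regular_Dclass (Q : finType) (M K : {set {set Q * Q}}) : Prop :=
  is_Dclass M K /\ exists2 e, e \in K & idem_rel e.

Definition Hclass (Q : finType) (M : {set {set Q * Q}}) (e : {set Q * Q})
  : {set {set Q * Q}} := [set m in M | Rrel M m e && Lrel M m e].

Definition hinv (Q : finType) (M : {set {set Q * Q}}) (e m : {set Q * Q})
  : {set Q * Q} :=
  odflt e [pick n in Hclass M e | (relc m n == e) && (relc n m == e)].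

Definition fixpts (Q : finType) (e : {set Q * Q}) : {set Q} := [set q | (q, q) \in e].

Definition resrel (Q : finType) (e : {set Q * Q}) : rel Q :=
  fun p q => [&& p \in fixpts e, q \in fixpts e & (p, q) \in e].

Definition scc (Q : finType) (e : {set Q * Q}) (p : Q) : {set Q} :=
  [set q in fixpts e | connect (resrel e) p q && connect (resrel e) q p].

Definition Gamma (Q : finType) (e : {set Q * Q}) : {set {set Q}} :=
  [set scc e p | p in fixpts e].

Definition gamma (Q : finType) (M : {set {set Q * Q}}) (e m : {set Q * Q})
  : {set {set Q} * {set Q}} :=
  [set x | [&& x.1 \in Gamma e, x.2 \in Gamma e &
     [exists r in x.1, [exists s in x.2,
        ((r, s) \in m) && ((s, r) \in hinv M e m)]]]].

Definition Gset (Q : finType) (M : {set {set Q * Q}}) (e : {set Q * Q})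
  : {set {set {set Q} * {set Q}}} := [set gamma M e m | m in Hclass M e].

(* permutation groups, whose elements are given as relations (graphs) on S *)
Definition is_perm_rel (T : finType) (S : {set T}) (g : {set T * T}) : Prop :=
  [/\ forall x, x \in g -> x.1 \in S /\ x.2 \in S,
      forall s, s \in S -> exists! t, (s, t) \in g
    & forall t, t \in S -> exists! s, (s, t) \in g].

Definition perm_group (T : finType) (S : {set T}) (G : {set {set T * T}}) : Prop :=
  [/\ forall g, g \in G -> is_perm_rel S g,
      [set x | (x.1 \in S) && (x.1 == x.2)] \in G
    & forall g h, g \in G -> h \in G -> relc g h \in G].

Definition transitive_pgroup (T : finType) (S : {set T}) (G : {set {set T * T}}) : Prop :=
  forall s t, s \in S -> t \in S -> exists2 g, g \in G & (s, t) \in g.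

Definition equiv_pgroups (T T' : finType) (S : {set T}) (G : {set {set T * T}})
  (S' : {set T'}) (G' : {set {set T' * T'}}) : Prop :=
  exists (theta : T -> T') (alpha : {set T * T} -> {set T' * T'}),
  [/\ {in S &, injective theta}, theta @: S = S',
      {in G &, injective alpha} /\ alpha @: G = G',
      {in G &, forall g h, alpha (relc g h) = relc (alpha g) (alpha h)}
    & forall g s t, g \in G -> s \in S -> t \in S ->
        ((s, t) \in g) = ((theta s, theta t) \in alpha g)].

Definition index_in (Q : finType) (H S : {set {set Q * Q}}) : nat :=
  #|[set [set relc m s | s in S] | m in H]|.

From mathcomp Require Import all_boot.
From mathcomp Require Import zify.
Set Implicit Arguments. Unset Strict Implicit. Unset Printing Implicit Defensive.

(* The argument is organised around an idempotent e of M of rank r.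
   - For any idempotent relation e, every arrow factors through a fixed
     point, and rank e is the number of components of e on its fixed points
     (an upper bound by factoring through the components, a lower bound by a
     fooling set).  Hence e has exactly r components.
   - A nonempty element of e M e merging two components would have rank < r;
     with transitivity this makes e symmetric on its fixed points and e the
     only nonempty idempotent of e M e, so e M e minus the empty relation is a
     group: it is H(e), and each m in H(e) permutes the components (gamma_e).
   - An element n = u v of rank r, factored through r points, satisfies
     n = (n y e) t^-1 (e x n) with t = e x n y e in H(e); hence K is the
     D-class of e, and any two idempotents e, f of K are conjugated by some
     a in e M f, b in f M e with a b = e and b a = f, which transports the
     components of e, and G_e, onto those of f and G_f.
   - The cosets of the stabiliser of a fixed point i correspond to the
     components of e, so its index is r. *)

Lemma relcP (A B C : finType) (u : {set A * B}) (v : {set B * C}) a c :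
  reflect (exists b, (a, b) \in u /\ (b, c) \in v) ((a, c) \in relc u v).
Proof.
rewrite inE /=; apply: (iffP existsP) => [[b /andP[ab bc]]|[b [ab bc]]].
  by exists b.
by exists b; rewrite ab bc.
Qed.

Lemma relcA (A B C D : finType) (u : {set A * B}) (v : {set B * C})
    (w : {set C * D}) :
  relc (relc u v) w = relc u (relc v w).
Proof.
apply/setP => [[a d]]; apply/relcP/relcP.
  move=> [c [/relcP[b [ab bc]] cd]]; exists b; split => //; apply/relcP; by exists c.
move=> [b [ab /relcP[c [bc cd]]]]; exists c; split => //; apply/relcP; by exists b.
Qed.

Lemma relc1m (Q : finType) (m : {set Q * Q}) : relc (idrel Q) m = m.
Proof.
apply/setP => [[a d]]; apply/relcP/idP; last by move=> ad; exists a; rewrite inE eqxx.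
by move=> [b []]; rewrite inE /= => /eqP ->.
Qed.

Lemma relcm1 (Q : finType) (m : {set Q * Q}) : relc m (idrel Q) = m.
Proof.
apply/setP => [[a d]]; apply/relcP/idP; last by move=> ad; exists d; rewrite inE eqxx.
by move=> [b []] ab; rewrite inE /= => /eqP <-.
Qed.

Lemma relc0m (A B C : finType) (v : {set B * C}) : relc (set0 : {set A * B}) v = set0.
Proof. by apply/setP => -[a c]; rewrite in_set0; apply/relcP => -[b []]; rewrite in_set0. Qed.

Lemma relcm0 (A B C : finType) (u : {set A * B}) : relc u (set0 : {set B * C}) = set0.
Proof. by apply/setP => -[a c]; rewrite in_set0; apply/relcP => -[b []]; rewrite in_set0. Qed.

Lemma rel_neq0 (A B : finType) (m : {set A * B}) a b : (a, b) \in m -> m != set0.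
Proof. by move=> ab; apply/set0Pn; exists (a, b). Qed.

Definition pw (Q : finType) (m : {set Q * Q}) k := iter k (relc m) (idrel Q).

Section Powers.
Variables (Q : finType) (m : {set Q * Q}).

Lemma pwS k : pw m k.+1 = relc m (pw m k). Proof. by []. Qed.

Lemma pwD i j : pw m (i + j) = relc (pw m i) (pw m j).
Proof. by elim: i => [|i IH]; rewrite ?relc1m // addSn !pwS IH relcA. Qed.

Lemma pwSr k : pw m k.+1 = relc (pw m k) m.
Proof. by rewrite -addn1 pwD /= relcm1. Qed.

Lemma pw_left (e : {set Q * Q}) k : relc e m = m -> relc e (pw m k.+1) = pw m k.+1.
Proof. by move=> em; rewrite pwS -relcA em. Qed.

Lemma pw_right (e : {set Q * Q}) k : relc m e = m -> relc (pw m k.+1) e = pw m k.+1.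
Proof. by move=> me; rewrite pwSr relcA me. Qed.

Lemma pw_loop c k : (c, c) \in m -> (c, c) \in pw m k.
Proof.
move=> cc; elim: k => [|k IH]; first by rewrite inE.
by rewrite pwS; apply/relcP; exists c.
Qed.

End Powers.

Lemma nat_pigeonhole (T : finType) (f : nat -> T) : exists i j, i < j /\ f i = f j.
Proof.
pose g (i : 'I_#|T|.+1) := f i.
have /injectivePn[i [j neq_ij eq_ij]] : ~~ injectiveb g.
  by apply/injectiveP => /leq_card; rewrite card_ord ltnn.
case: (ltngtP i j) => [lt_ij|lt_ji|/val_inj eq]; [by exists i, j|by exists j, i|].
by rewrite eq eqxx in neq_ij.
Qed.

(* Some positive power of any relation is idempotent: the powers are
   eventually periodic, and a multiple of the period beyond the preperiod
   gives an idempotent. *)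
Lemma pw_idem (Q : finType) (m : {set Q * Q}) :
  exists k, relc (pw m k.+1) (pw m k.+1) = pw m k.+1.
Proof.
have [i [j [lt_ij eq_ij]]] := nat_pigeonhole (fun i => pw m i.+1).
set p := j - i; have p_gt0 : 0 < p by rewrite subn_gt0.
have period a : i < a -> pw m (a + p) = pw m a.
  move=> lt_ia; have -> : a + p = (a - i.+1) + j.+1 by rewrite /p; lia.
  by rewrite pwD -eq_ij -pwD; congr pw; lia.
have periodM a t : i < a -> pw m (a + t * p) = pw m a.
  move=> lt_ia; elim: t => [|t IH]; first by rewrite addn0.
  have -> : a + t.+1 * p = a + t * p + p by rewrite mulSn; lia.
  by rewrite period // ltn_addr.
exists (i.+1 * p).-1; rewrite prednK ?muln_gt0 // -pwD periodM //; nia.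
Qed.

(* Boolean rank: upper bounds by factorisation, lower bounds by fooling sets. *)
Section Rank.
Variable Q : finType.
Implicit Types m : {set Q * Q}.

Lemma rank_min m k : rank_le m k -> rank m <= k.
Proof. by rewrite /rank; case: ex_minnP => n _; apply. Qed.

Lemma rank_leP m : rank_le m (rank m).
Proof. by rewrite /rank; case: ex_minnP. Qed.

Lemma rank_factor (I : finType) (u : {set Q * I}) (v : {set I * Q}) (J : {set I}) :
  (forall p i, (p, i) \in u -> i \in J) -> rank (relc u v) <= #|J|.
Proof.
move=> uJ; apply: rank_min; apply/existsP.
exists [set x : Q * 'I_#|J| | (x.1, enum_val x.2) \in u]; apply/existsP.
exists [set x : 'I_#|J| * Q | (enum_val x.1, x.2) \in v].
apply/eqP/setP => [[p q]]; apply/relcP/relcP; last first.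
  by move=> [k]; rewrite !inE /= => -[pk kq]; exists (enum_val k).
move=> [i [pi iq]]; have iJ := uJ _ _ pi.
by exists (enum_rank_in iJ i); rewrite !inE /= enum_rankK_in.
Qed.

Lemma rank_classes (I : finType) (iota : Q -> I) (D : {set Q}) (a m : {set Q * Q}) :
  (forall p c c' q, c \in D -> c' \in D -> (p, c) \in a -> iota c = iota c' ->
     (c', q) \in m -> (p, q) \in m) ->
  (forall p q, (p, q) \in m -> exists c, [/\ c \in D, (p, c) \in a & (c, q) \in m]) ->
  rank m <= #|iota @: D|.
Proof.
move=> same_fibre through.
pose u := [set x : Q * I | [exists c in D, (iota c == x.2) && ((x.1, c) \in a)]].
pose v := [set x : I * Q | [exists c in D, (iota c == x.1) && ((c, x.2) \in m)]].
suff -> : m = relc u v.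
  apply: rank_factor => p i; rewrite inE => /existsP[c /and3P[cD /eqP /= <- _]].
  exact: imset_f.
apply/setP => [[p q]]; apply/idP/relcP.
  move=> /through[c [cD pc cq]]; exists (iota c); rewrite !inE /=.
  by split; apply/existsP; exists c; rewrite cD eqxx.
move=> [i []]; rewrite !inE /= => /existsP[c /and3P[cD /eqP ci pc]].
move=> /existsP[c' /and3P[c'D /eqP c'i c'q]].
by apply: (same_fibre p c c' q) => //; rewrite ci c'i.
Qed.

Lemma rank_relc_l (a b : {set Q * Q}) : rank (relc a b) <= rank a.
Proof.
apply: rank_min; move: (rank_leP a) => /existsP[u /existsP[v /eqP aE]].
by apply/existsP; exists u; apply/existsP; exists (relc v b); rewrite -relcA -aE.
Qed.

Lemma rank_relc_r (a b : {set Q * Q}) : rank (relc a b) <= rank b.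
Proof.
apply: rank_min; move: (rank_leP b) => /existsP[u /existsP[v /eqP bE]].
by apply/existsP; exists (relc a u); apply/existsP; exists v; rewrite relcA -bE.
Qed.

Lemma rank_set0 : rank (set0 : {set Q * Q}) = 0.
Proof.
apply/eqP; rewrite -leqn0; apply: rank_min; apply/existsP; exists set0.
by apply/existsP; exists set0; rewrite relc0m.
Qed.

Lemma rank_eq0 m : rank m = 0 -> m = set0.
Proof.
move=> r0; move: (rank_leP m); rewrite r0 => /existsP[u /existsP[v /eqP ->]].
by apply/setP => [[p q]]; rewrite in_set0; apply/relcP => -[[]].
Qed.

Lemma rank_fooling (I : finType) m (B : {set I}) (ps qs : I -> Q) :
  (forall i, i \in B -> (ps i, qs i) \in m) ->
  (forall i j, i \in B -> j \in B -> (ps i, qs j) \in m -> (ps j, qs i) \in m -> i = j) ->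
  #|B| <= rank m.
Proof.
move=> inm uncrossed; move: (rank_leP m); move: (rank m) => k.
move=> /existsP[u /existsP[v /eqP mE]].
pose mid i := [pick b | ((ps i, b) \in u) && ((b, qs i) \in v)].
have midP i : i \in B -> exists b, [/\ mid i = Some b, (ps i, b) \in u & (b, qs i) \in v].
  move=> iB; rewrite /mid; case: pickP => [b /andP[]|none]; first by exists b.
  by move: (inm i iB); rewrite mE => /relcP[b [pb bq]]; move: (none b); rewrite pb bq.
have mid_inj : {in B &, injective mid}.
  move=> i j iB jB; have [b [-> ib bi]] := midP i iB; have [c [-> jc cj]] := midP j jB.
  by move=> [bc]; subst c; apply: uncrossed => //; rewrite mE; apply/relcP; exists b.
rewrite -(card_in_imset mid_inj).
have : mid @: B \subset Some @: [set: 'I_k].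
  by apply/subsetP => _ /imsetP[i iB ->]; have [b [-> _ _]] := midP i iB; exact: imset_f.
move/subset_leq_card/leq_trans; apply.
by rewrite card_imset ?cardsT ?card_ord //; move=> ? ? [].
Qed.

End Rank.

Section Idempotent.
Variables (Q : finType) (e : {set Q * Q}).
Hypothesis ee : relc e e = e.

Lemma fix_loop c : c \in fixpts e -> (c, c) \in e.
Proof. by rewrite inE. Qed.

Lemma idem_trans a b c : (a, b) \in e -> (b, c) \in e -> (a, c) \in e.
Proof. by move=> ab bc; rewrite -ee; apply/relcP; exists b. Qed.

(* Iterating the splitting a e c = a e b e c backwards from c must cycle, and
   a point on the cycle is fixed. *)
Lemma idem_factor p q : (p, q) \in e ->
  exists c, [/\ c \in fixpts e, (p, c) \in e & (c, q) \in e].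
Proof.
move=> pq; pose X := [set x | ((p, x) \in e) && ((x, q) \in e)].
have back x : x \in X -> exists y, y \in X /\ (y, x) \in e.
  rewrite inE => /andP[px xq]; move: px; rewrite -{1}ee => /relcP[y [py yx]].
  by exists y; rewrite inE py (idem_trans yx xq).
pose g x := odflt x [pick y in X | (y, x) \in e].
have gP x : x \in X -> g x \in X /\ (g x, x) \in e.
  move=> xX; rewrite /g; case: pickP => [y /andP[]|none] //=.
  by have [y [yX yx]] := back x xX; move: (none y); rewrite yX yx.
have [x0 [px0 x0q]] : exists x0, (p, x0) \in e /\ (x0, q) \in e.
  by move: pq; rewrite -{1}ee => /relcP.
have itX n : iter n g x0 \in X by elim: n => [|n IH]; [rewrite inE px0 x0q | case: (gP _ IH)].
have itE n k : (iter (k.+1 + n) g x0, iter n g x0) \in e.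
  elim: k => [|k IH]; first by case: (gP _ (itX n)).
  by case: (gP _ (itX (k.+1 + n))) => _ /idem_trans; apply.
have [i [j [lt_ij eq_ij]]] := nat_pigeonhole (fun n => iter n g x0).
exists (iter i g x0); move: (itX i); rewrite inE => /andP[pi iq]; split => //.
have ji : (j - i).-1.+1 + i = j by lia.
by move: (itE i (j - i).-1); rewrite ji -eq_ij inE.
Qed.

Lemma connect_fix p q : p \in fixpts e ->
  connect (resrel e) p q = (q \in fixpts e) && ((p, q) \in e).
Proof.
move=> pF; apply/idP/idP; last by move=> /andP[qF pq]; apply: connect1; rewrite /resrel pF qF.
move/connectP => [s + ->]; elim: s p pF => [|x s IH] p pF /=; first by rewrite pF fix_loop.
by move=> /andP[/and3P[_ xF px] /(IH x xF)/andP[-> /(idem_trans px)]].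
Qed.

Lemma mem_scc p q : p \in fixpts e ->
  (q \in scc e p) = [&& q \in fixpts e, (p, q) \in e & (q, p) \in e].
Proof.
move=> pF; rewrite inE; case qF: (q \in fixpts e) => //=.
by rewrite !connect_fix // qF pF.
Qed.

Lemma scc_self p : p \in fixpts e -> p \in scc e p.
Proof. by move=> pF; rewrite mem_scc // pF fix_loop. Qed.

Lemma eq_scc c d : c \in fixpts e -> d \in fixpts e -> (c, d) \in e -> (d, c) \in e ->
  scc e c = scc e d.
Proof.
move=> cF dF cd dc; apply/setP => x; rewrite !mem_scc //.
case: (x \in fixpts e) => //=; apply/andP/andP => -[xa ax].
  by split; [apply: idem_trans dc xa | apply: idem_trans ax cd].
by split; [apply: idem_trans cd xa | apply: idem_trans ax dc].
Qed.

Lemma eq_sccE c d : c \in fixpts e -> d \in fixpts e -> scc e c = scc e d ->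
  (c, d) \in e /\ (d, c) \in e.
Proof. by move=> cF dF cd; move: (scc_self dF); rewrite -cd mem_scc // => /and3P[]. Qed.

Lemma GammaP C : reflect (exists2 c, c \in fixpts e & C = scc e c) (C \in Gamma e).
Proof. exact: imsetP. Qed.

Lemma scc_Gamma c : c \in fixpts e -> scc e c \in Gamma e.
Proof. exact: imset_f. Qed.

Lemma mem_Gamma C c : C \in Gamma e -> c \in C -> c \in fixpts e /\ C = scc e c.
Proof.
move=> /GammaP[d dF ->]; rewrite mem_scc // => /and3P[cF dc cd].
by split => //; apply: eq_scc.
Qed.

(* A chosen point of a component (the default p0 is never used on Gamma e). *)
Definition rep (p0 : Q) (C : {set Q}) : Q := odflt p0 [pick x in C].

Lemma repP p0 C : C \in Gamma e -> rep p0 C \in fixpts e /\ C = scc e (rep p0 C).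
Proof.
move=> CG; rewrite /rep; case: pickP => [x xC|none] /=; first exact: mem_Gamma.
by case/GammaP: CG => c cF CE; move: (none c); rewrite CE scc_self.
Qed.

Lemma rank_fibres (I : finType) (iota : Q -> I) (z : {set Q * Q}) :
  relc e z = z -> relc z z = z ->
  (forall c c', c \in fixpts e -> c' \in fixpts e -> iota c = iota c' ->
     (c, c') \in e \/ (c, c') \in z) ->
  rank z <= #|iota @: fixpts e|.
Proof.
move=> ez zz fibre; apply: (rank_classes (a := e)).
  move=> p c c' q cF c'F pc /(fibre c c' cF c'F) [cc'|cc'] c'q.
    by rewrite -ez; apply/relcP; exists c'; rewrite (idem_trans pc).
  by rewrite -ez -zz; apply/relcP; exists c; split => //; apply/relcP; exists c'.
move=> p q; rewrite -{1}ez => /relcP[a [pa aq]]; have [c [cF pc ca]] := idem_factor pa.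
by exists c; split => //; rewrite -ez; apply/relcP; exists a.
Qed.

Lemma rank_idem : rank e = #|Gamma e|.
Proof.
apply/eqP; rewrite eqn_leq; apply/andP; split.
  by apply: rank_fibres => // c c' cF c'F /(eq_sccE cF c'F)[]; left.
have [p0 _|Q0] := pickP (fun q => q \in fixpts e); last first.
  suff -> : Gamma e = set0 by rewrite cards0.
  by apply/setP => C; rewrite in_set0; apply/GammaP => -[c cF _]; rewrite Q0 in cF.
apply: (rank_fooling (ps := rep p0) (qs := rep p0)).
  by move=> C /(repP p0)[/fix_loop].
move=> C D CG DG cd dc; have [cF ->] := repP p0 CG; have [dF ->] := repP p0 DG.
exact: eq_scc.
Qed.

End Idempotent.

(* a and b conjugate e to f: a f = a, b e = b, ab = e and ba = f.  Both the
   groups H(e) and pairs of D-related idempotents provide such data. *)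
Definition conjugates (Q : finType) (e f a b : {set Q * Q}) : Prop :=
  [/\ relc a f = a, relc b e = b, relc a b = e & relc b a = f].

Section Conjugates.
Variables (Q : finType) (e f a b : {set Q * Q}).
Hypothesis cj : conjugates e f a b.

Lemma conjugates_sym : conjugates f e b a.
Proof. by case: cj. Qed.

Lemma conj_left : relc e a = a.
Proof. by case: cj => af _ ab ba; rewrite -ab relcA ba af. Qed.

Lemma conj_right : relc f b = b.
Proof. by case: cj => _ be ab ba; rewrite -ba relcA ab be. Qed.

End Conjugates.

Section Relabel.
Variables (T T' : finType) (S : {set T}) (theta : T -> T').
Hypothesis theta_inj : {in S &, injective theta}.

Definition relabel (g : {set T * T}) : {set T' * T'} := [set (theta x.1, theta x.2) | x in g].

Definition rel_on (g : {set T * T}) : Prop := forall x, x \in g -> x.1 \in S /\ x.2 \in S.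

Lemma mem_relabel g s t : rel_on g -> s \in S -> t \in S ->
  ((theta s, theta t) \in relabel g) = ((s, t) \in g).
Proof.
move=> gS sS tS; apply/imsetP/idP => [[[s' t'] st' /= [E1 E2]]|st]; last by exists (s, t).
by have [/= s'S t'S] := gS _ st'; rewrite (theta_inj sS s'S E1) (theta_inj tS t'S E2).
Qed.

Lemma relabel_relc g h : rel_on g -> rel_on h -> relabel (relc g h) = relc (relabel g) (relabel h).
Proof.
move=> gS hS; apply/setP => -[X Y]; apply/imsetP/relcP.
  move=> [[s t] /relcP[z [sz zt]] /= [-> ->]].
  by exists (theta z); split; apply/imsetP; [exists (s, z) | exists (z, t)].
move=> [Z [/imsetP[[s z] sz /= [-> ->]] /imsetP[[z' t] z't /= [Ez ->]]]].
have [_ /= zS] := gS _ sz; have [/= z'S _] := hS _ z't.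
exists (s, t) => //; apply/relcP; exists z; split => //.
by rewrite (theta_inj zS z'S Ez).
Qed.

Lemma relabel_inj g h : rel_on g -> rel_on h -> relabel g = relabel h -> g = h.
Proof.
move=> gS hS E; apply/setP => -[s t]; apply/idP/idP => st.
  by have [/= sS tS] := gS _ st; rewrite -(mem_relabel hS sS tS) -E mem_relabel.
by have [/= sS tS] := hS _ st; rewrite -(mem_relabel gS sS tS) E mem_relabel.
Qed.

Lemma relabel_on g : rel_on g -> forall x, x \in relabel g ->
  x.1 \in theta @: S /\ x.2 \in theta @: S.
Proof. by move=> gS _ /imsetP[y /gS[y1S y2S] ->]; split; apply: imset_f. Qed.

End Relabel.

Lemma bigmin_leq (T : eqType) (s : seq T) (P : pred T) (F : T -> nat) x i :
  i \in s -> P i -> \big[minn/x]_(j <- s | P j) F j <= F i.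
Proof.
elim: s => // a s IH; rewrite in_cons big_cons => /orP[/eqP <- ->|si Pi].
  exact: geq_minl.
by case: ifP => _; [apply: leq_trans (geq_minr _ _) _|]; apply: IH.
Qed.

Lemma card_imset_kernel (A B1 B2 : finType) (D : {set A}) (f1 : A -> B1) (f2 : A -> B2) :
  {in D &, forall x y, (f1 x == f1 y) = (f2 x == f2 y)} -> #|f1 @: D| = #|f2 @: D|.
Proof.
move=> kerE; pose g x := (f1 x, f2 x).
have -> : f1 @: D = fst @: (g @: D) by rewrite -imset_comp; apply: eq_imset.
have -> : f2 @: D = snd @: (g @: D) by rewrite -imset_comp; apply: eq_imset.
have gD1 : {in g @: D &, injective fst}.
  move=> _ _ /imsetP[x xD ->] /imsetP[y yD ->] /= E; rewrite /g E.
  by move/eqP: E; rewrite kerE // => /eqP ->.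
have gD2 : {in g @: D &, injective snd}.
  move=> _ _ /imsetP[x xD ->] /imsetP[y yD ->] /= E; rewrite /g E.
  by move/eqP: E; rewrite -kerE // => /eqP ->.
by rewrite (card_in_imset gD1) (card_in_imset gD2).
Qed.

Lemma Drel_rank (Q : finType) (M : {set {set Q * Q}}) (m n : {set Q * Q}) :
  Drel M m n -> rank n = rank m.
Proof.
move=> /existsP[p /andP[_ /andP[mLp pRn]]].
move: mLp => /existsP[a /andP[_ /existsP[b /andP[_ /andP[/eqP mE /eqP pE]]]]].
move: pRn => /existsP[a' /andP[_ /existsP[b' /andP[_ /andP[/eqP pE' /eqP nE]]]]].
apply/eqP; rewrite eqn_leq; apply/andP; split.
  by rewrite nE (leq_trans (rank_relc_l _ _)) // pE rank_relc_r.
by rewrite mE (leq_trans (rank_relc_r _ _)) // pE' rank_relc_l.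
Qed.

Section Monoid.
Variables (Q : finType) (M : {set {set Q * Q}}).
Hypothesis Q_gt0 : 0 < #|Q|.
Hypothesis monoidM : is_rel_monoid M.
Hypothesis transM : transitive_relmon M.

Local Notation r := (minrank M).

Definition min_idem (e : {set Q * Q}) : Prop := [/\ relc e e = e, e \in M & rank e = r].

Lemma idrel_in : idrel Q \in M. Proof. by case: monoidM. Qed.

Lemma relc_in m n : m \in M -> n \in M -> relc m n \in M.
Proof. by case: monoidM => _; apply. Qed.

Lemma pw_in m k : m \in M -> pw m k \in M.
Proof. by move=> mM; elim: k => [|k IH]; [apply: idrel_in | apply: relc_in]. Qed.

Lemma minrank_le m : m \in M -> m != set0 -> r <= rank m.
Proof. by move=> mM m0; apply: bigmin_leq; rewrite ?mem_index_enum ?mM. Qed.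

(* The identity has rank at most |Q|, so the default value of the minimum is
   never below an actual rank and r is attained. *)
Lemma minrank_attained : exists m, [/\ m \in M, m != set0 & rank m = r].
Proof.
have id0 : idrel Q != set0.
  by case/card_gt0P: Q_gt0 => q _; apply: (rel_neq0 (a := q) (b := q)); rewrite inE.
have idQ : rank (idrel Q) <= #|Q|.
  by rewrite -{1}(relcm1 (idrel Q)) -cardsT; apply: rank_factor => p i; rewrite inE.
pose P v := v = #|Q| \/ exists m, [/\ m \in M, m != set0 & rank m = v].
have : P r.
  apply: (big_ind P) => [|x y Px Py|m /andP[mM m0]]; [by left| |by right; exists m].
  by case: (leqP x y).
case=> // rQ; exists (idrel Q); split => //; [exact: idrel_in|].
by apply/eqP; rewrite eqn_leq minrank_le ?idrel_in // rQ idQ.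
Qed.

Lemma minrank_gt0 : 0 < r.
Proof.
have [m [_ m0 <-]] := minrank_attained; rewrite lt0n.
by apply: contraTneq m0 => /rank_eq0 ->; rewrite eqxx.
Qed.

Lemma minrank_neq0 (m : {set Q * Q}) : rank m = r -> m != set0.
Proof. by move=> mr; apply: contraTneq minrank_gt0 => m0; rewrite -mr m0 rank_set0. Qed.

Section MinimalIdempotent.
Variable e : {set Q * Q}.
Hypothesis emin : min_idem e.
Let ee : relc e e = e. Proof. by case: emin. Qed.
Let eM : e \in M. Proof. by case: emin. Qed.
Let er : rank e = r. Proof. by case: emin. Qed.

Lemma card_Gamma : #|Gamma e| = r.
Proof. by rewrite -er rank_idem. Qed.

Lemma meet_all_classes (D : {set Q}) m :
  D \subset fixpts e -> m \in M -> m != set0 -> rank m <= #|scc e @: D| ->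
  forall d, d \in fixpts e -> exists2 c, c \in D & scc e c = scc e d.
Proof.
move=> /subsetP DF mM m0 mD d dF.
have sub : scc e @: D \subset Gamma e.
  by apply/subsetP => _ /imsetP[c /DF cF ->]; apply: scc_Gamma.
have : scc e @: D == Gamma e.
  by rewrite eqEcard sub card_Gamma (leq_trans (minrank_le mM m0) mD).
by move=> /eqP GE; move: (scc_Gamma dF); rewrite -GE => /imsetP[c cD ->]; exists c.
Qed.

(* An idempotent z of M in e M e linking two fixed points both ways cannot
   separate their components: merging them would give z rank below r. *)
Lemma no_merge z c d : z \in M -> z != set0 -> relc e z = z -> relc z e = z ->
  relc z z = z -> c \in fixpts e -> d \in fixpts e -> (c, d) \in z -> (d, c) \in z ->
  scc e c = scc e d.
Proof.
move=> zM z0 ez ze zz cF dF cd dc; apply/eqP/negPn/negP => sep.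
have ezeP a b b' a' : (a, b) \in e -> (b, b') \in z -> (b', a') \in e -> (a, a') \in z.
  move=> ab bb' b'a'; rewrite -ez; apply/relcP; exists b; split => //.
  by rewrite -ze; apply/relcP; exists b'.
pose h (C : {set Q}) := if C == scc e d then scc e c else C.
have : rank z <= #|(h \o scc e) @: fixpts e|.
  apply: rank_fibres => // c1 c2 c1F c2F /=; rewrite /h.
  have [E12|N12] := eqVneq (scc e c1) (scc e c2); first by left; case: (eq_sccE ee c1F c2F E12).
  case: ifP => /eqP E1; case: ifP => /eqP E2 E; right.
  - by rewrite E1 E2 eqxx in N12.
  - have [c1d _] := eq_sccE ee c1F dF E1; have [cc2 _] := eq_sccE ee cF c2F E.
    exact: ezeP c1d dc cc2.
  - have [c1c _] := eq_sccE ee c1F cF E; have [dc2 _] := eq_sccE ee dF c2F (esym E2).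
    exact: ezeP c1c cd dc2.
  - by rewrite E eqxx in N12.
have : #|h @: Gamma e| < #|Gamma e|.
  rewrite ltn_neqAle leq_imset_card andbT; apply: contra sep => /imset_injP hinj.
  apply/eqP/esym/hinj; rewrite ?scc_Gamma // /h eqxx; by case: ifP.
rewrite imset_comp card_Gamma => hlt zle.
by move: (leq_trans (minrank_le zM z0) zle); rewrite leqNgt hlt.
Qed.

Lemma fix_sym c d : c \in fixpts e -> d \in fixpts e -> (c, d) \in e -> (d, c) \in e.
Proof.
move=> cF dF cd; have [x xM dc] := transM d c.
set y := relc e (relc x e).
have yM : y \in M by rewrite !relc_in.
have ey : relc e y = y by rewrite /y -relcA ee.
have ye : relc y e = y by rewrite /y !relcA ee.
have ydc : (d, c) \in y.
  by apply/relcP; exists d; split; rewrite ?fix_loop //; apply/relcP; exists c; rewrite fix_loop.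
have ycc : (c, c) \in y by rewrite -ey; apply/relcP; exists d.
have ycd : (c, d) \in y by rewrite -ye; apply/relcP; exists c.
have [k zz] := pw_idem y; set z := pw y k.+1 in zz.
have zdc : (d, c) \in z by rewrite /z pwS; apply/relcP; exists c; rewrite pw_loop.
have zcd : (c, d) \in z by rewrite /z pwSr; apply/relcP; exists c; rewrite pw_loop.
have := no_merge (pw_in _ yM) (rel_neq0 zdc) (pw_left _ ey) (pw_right _ ye) zz cF dF zcd zdc.
by case/(eq_sccE ee cF dF).
Qed.

End MinimalIdempotent.

Section GroupOfIdempotent.
Variable e : {set Q * Q}.
Hypothesis emin : min_idem e.
Let ee : relc e e = e. Proof. by case: emin. Qed.
Let eM : e \in M. Proof. by case: emin. Qed.
Let er : rank e = r. Proof. by case: emin. Qed.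

(* Every fixed point is e-linked to the source of an arrow of a nonempty
   m = e m of M: the sources of m meet every component. *)
Lemma fix_out m d : m \in M -> m != set0 -> relc e m = m -> d \in fixpts e ->
  exists c q, (d, c) \in e /\ (c, q) \in m.
Proof.
move=> mM m0 em dF; set D := [set c in fixpts e | [exists q, (c, q) \in m]].
have DF : D \subset fixpts e by rewrite /D setIdE subsetIl.
have mD : rank m <= #|scc e @: D|.
  apply: (rank_classes (a := e)).
    move=> p c c' q /setIdP[cF _] /setIdP[c'F _] pc /(eq_sccE ee cF c'F)[cc' _] c'q.
    by rewrite -em; apply/relcP; exists c; split => //; rewrite -em; apply/relcP; exists c'.
  move=> p q; rewrite -{1}em => /relcP[a [pa aq]]; have [c [cF pc ca]] := idem_factor ee pa.
  have cq : (c, q) \in m by rewrite -em; apply/relcP; exists a.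
  by exists c; split => //; rewrite inE cF; apply/existsP; exists q.
have [c /setIdP[cF /existsP[q cq]] cd] := meet_all_classes emin DF mM m0 mD dF.
by exists c, q; split => //; case: (eq_sccE ee dF cF (esym cd)).
Qed.

Lemma relc_neq0 (m n : {set Q * Q}) : m != set0 -> relc m e = m ->
  n \in M -> n != set0 -> relc e n = n -> relc m n != set0.
Proof.
move=> /set0Pn[[p q] pq] me nM n0 en; move: pq; rewrite -{1}me => /relcP[a [pa aq]].
have [d [dF ad dq]] := idem_factor ee aq; have [c [q' [dc cq']]] := fix_out nM n0 en dF.
apply: (rel_neq0 (a := p) (b := q')); apply/relcP; exists a; split => //.
by rewrite -en; apply/relcP; exists c; rewrite (idem_trans ee ad dc).
Qed.

(* A nonempty idempotent f in e M e contains e: each component of e carries a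
   loop of f, since f factors through those components. *)
Lemma idem_contains f : f \in M -> relc f f = f -> f != set0 -> relc e f = f ->
  relc f e = f -> e \subset f.
Proof.
move=> fM ff f0 ef fe; have efe : relc e (relc f e) = f by rewrite fe ef.
set D := [set c in fixpts e | (c, c) \in f].
have DF : D \subset fixpts e by rewrite /D setIdE subsetIl.
have fD : rank f <= #|scc e @: D|.
  apply: (rank_classes (a := f)).
    move=> p c c' q /setIdP[cF _] /setIdP[c'F _] pc /(eq_sccE ee cF c'F)[cc' _] c'q.
    by rewrite -ff; apply/relcP; exists c; split => //; rewrite -ef; apply/relcP; exists c'.
  move=> p q /(idem_factor ff)[d [dF pd dq]].
  have : (d, d) \in relc e (relc f e) by rewrite efe fix_loop.
  move=> /relcP[a [da /relcP[b [ab bd]]]]; have [c [cF dc ca]] := idem_factor ee da.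
  have cd : (c, d) \in f by rewrite -efe; apply/relcP; exists a; split => //; apply/relcP; exists b.
  have dc' : (d, c) \in f by rewrite -fe; apply/relcP; exists d; rewrite fix_loop.
  exists c; split; first by rewrite inE cF -ff; apply/relcP; exists d.
    by rewrite -ff; apply/relcP; exists d.
  by rewrite -ff; apply/relcP; exists d.
apply/subsetP => -[p q] /(idem_factor ee)[c0 [c0F pc0 c0q]].
have [c /setIdP[cF cc] E] := meet_all_classes emin DF fM f0 fD c0F.
have [c0c cc0] := eq_sccE ee c0F cF (esym E).
rewrite -efe; apply/relcP; exists c; split; first exact: idem_trans pc0 c0c.
by apply/relcP; exists c; rewrite (idem_trans ee cc0 c0q).
Qed.

Lemma idem_eMe f : f \in M -> relc f f = f -> f != set0 -> relc e f = f ->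
  relc f e = f -> f = e.
Proof.
move=> fM ff f0 ef fe; have sub_ef := subsetP (idem_contains fM ff f0 ef fe).
have fr : rank f = r.
  by apply/eqP; rewrite eqn_leq minrank_le // andbT -er -{1}ef rank_relc_l.
apply/setP => -[p q]; apply/idP/idP; last exact: sub_ef.
rewrite -{1}ef -{1}fe => /relcP[a [pa /relcP[b [ab bq]]]].
have [c [cF pc ca]] := idem_factor ee pa; have [c' [c'F bc' c'q]] := idem_factor ee bq.
have fixf x : x \in fixpts e -> x \in fixpts f by rewrite !inE => /sub_ef.
have cc' : (c, c') \in f.
  by rewrite -ef -fe; apply/relcP; exists a; split => //; apply/relcP; exists b.
have c'c := fix_sym (And3 ff fM fr) (fixf _ cF) (fixf _ c'F) cc'.
have [cc'e _] := eq_sccE ee cF c'F (no_merge emin fM f0 ef fe ff cF c'F cc' c'c).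
exact: idem_trans (idem_trans ee pc cc'e) c'q.
Qed.

(* Inverses in e M e: a suitable power m^(k+1) is a nonempty idempotent of
   e M e, hence equals e, and e m^k e is the inverse of m. *)
Lemma eMe_inverse m : m \in M -> relc e m = m -> relc m e = m -> m != set0 ->
  exists n, [/\ n \in M, relc e n = n, relc n e = n, relc m n = e & relc n m = e].
Proof.
move=> mM em me m0; have [k idem] := pw_idem m.
have pw0 j : pw m j.+1 != set0.
  elim: j => [|j IH]; first by rewrite pwS relcm1.
  by rewrite pwS; apply: relc_neq0 => //; [apply: pw_in | apply: pw_left].
have pwE : pw m k.+1 = e.
  by apply: idem_eMe; [apply: pw_in | | apply: pw0 | apply: pw_left | apply: pw_right].
exists (relc e (relc (pw m k) e)); split.
- by rewrite !relc_in ?pw_in.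
- by rewrite -relcA ee.
- by rewrite !relcA ee.
- by rewrite -relcA me -relcA -pwS pwE ee.
- by rewrite !relcA em -pwSr pwE ee.
Qed.

Lemma HclassP m :
  reflect [/\ m \in M, relc e m = m, relc m e = m & m != set0] (m \in Hclass M e).
Proof.
apply: (iffP idP).
  rewrite inE => /and3P[mM mRe mLe].
  move: mRe => /existsP[a /andP[aM /existsP[b /andP[bM /andP[/eqP ma /eqP eb]]]]].
  move: mLe => /existsP[a' /andP[a'M /existsP[b' /andP[b'M /andP[/eqP ma' _]]]]].
  split => //; [by rewrite ma -relcA ee | by rewrite ma' relcA ee|].
  by apply: contraTneq (minrank_neq0 er) => m0; rewrite eb m0 relc0m eqxx.
move=> [mM em me m0]; have [n [nM en ne mn nm]] := eMe_inverse mM em me m0.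
rewrite inE mM /Rrel /Lrel /=; apply/andP; split; apply/existsP; exists m; rewrite mM /=;
  apply/existsP; exists n; by rewrite nM ?em ?me ?mn ?nm !eqxx.
Qed.

End GroupOfIdempotent.

Section ConjugateFixpoints.
Variables e f a b : {set Q * Q}.
Hypotheses (emin : min_idem e) (fmin : min_idem f) (cj : conjugates e f a b).

Lemma conj_flip c d : c \in fixpts e -> d \in fixpts f -> (c, d) \in a -> (d, c) \in b.
Proof.
case: cj => _ be ab ba; have [ee _ _] := emin; move=> cF dF cd.
have : (d, d) \in relc b a by rewrite ba fix_loop.
move=> /relcP[z [dz]]; rewrite -(conj_left cj) => /relcP[w [zw wd]].
have [c1 [c1F zc1 c1w]] := idem_factor ee zw.
have dc1 : (d, c1) \in b by rewrite -be; apply/relcP; exists z.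
have cc1 : (c, c1) \in e by rewrite -ab; apply/relcP; exists d.
by rewrite -be; apply/relcP; exists c1; rewrite (fix_sym emin cF c1F cc1).
Qed.

Lemma conj_out c : (c, c) \in e -> exists2 d, d \in fixpts f & (c, d) \in a.
Proof.
case: cj => af _ ab _; have [ff _ _] := fmin.
rewrite -ab => /relcP[z [cz _]]; move: cz; rewrite -{1}af => /relcP[w [cw wz]].
have [d [dF wd dz]] := idem_factor ff wz.
by exists d => //; rewrite -af; apply/relcP; exists w.
Qed.

Lemma conj_uniq c d d' : c \in fixpts e -> d \in fixpts f -> d' \in fixpts f ->
  (c, d) \in a -> (c, d') \in a -> (d, d') \in f.
Proof.
case: cj => _ _ _ ba cF dF d'F cd cd'.
by rewrite -ba; apply/relcP; exists c; rewrite (conj_flip cF dF cd).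
Qed.

Lemma conj_closed c' c d d' : (c', c) \in e -> (c, d) \in a -> (d, d') \in f ->
  (c', d') \in a.
Proof.
case: cj => af _ _ _ c'c cd dd'; rewrite -(conj_left cj); apply/relcP; exists c.
by split => //; rewrite -af; apply/relcP; exists d.
Qed.

End ConjugateFixpoints.

Section HGroup.
Variable e : {set Q * Q}.
Hypothesis emin : min_idem e.
Let ee : relc e e = e. Proof. by case: emin. Qed.
Let eM : e \in M. Proof. by case: emin. Qed.
Let er : rank e = r. Proof. by case: emin. Qed.
Local Notation H := (Hclass M e).

Lemma e_in_H : e \in H.
Proof. by apply/(HclassP emin); split => //; apply: minrank_neq0. Qed.

Lemma Hmul m n : m \in H -> n \in H -> relc m n \in H.
Proof.
move=> /(HclassP emin)[mM em me m0] /(HclassP emin)[nM en ne n0].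
apply/(HclassP emin); split; [exact: relc_in | by rewrite -relcA em | by rewrite relcA ne|].
exact (relc_neq0 emin m0 me nM n0 en).
Qed.

Lemma hinvP m : m \in H ->
  [/\ hinv M e m \in H, relc m (hinv M e m) = e & relc (hinv M e m) m = e].
Proof.
move=> mH; rewrite /hinv; case: pickP => [n /andP[nH /andP[/eqP mn /eqP nm]] | none] //=.
have [mM em me m0] := HclassP emin _ mH.
have [n [nM en ne mn nm]] := eMe_inverse emin mM em me m0.
have nH : n \in H.
  apply/(HclassP emin); split => //.
  by apply: contraTneq (minrank_neq0 er) => n0; rewrite -nm n0 relc0m eqxx.
by move: (none n); rewrite nH mn nm !eqxx.
Qed.

Lemma H_conj m : m \in H -> conjugates e e m (hinv M e m).
Proof.
move=> mH; have [nH mn nm] := hinvP mH.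
by case/(HclassP emin): mH => _ _ me _; case/(HclassP emin): nH => _ _ ne _.
Qed.

Lemma H_flip m c d : m \in H -> c \in fixpts e -> d \in fixpts e -> (c, d) \in m ->
  (d, c) \in hinv M e m.
Proof. by move/H_conj/(conj_flip emin); apply. Qed.

Lemma H_unflip m c d : m \in H -> c \in fixpts e -> d \in fixpts e ->
  (d, c) \in hinv M e m -> (c, d) \in m.
Proof. by move/H_conj/conjugates_sym/(conj_flip emin) => flip cF dF; apply: flip. Qed.

Lemma H_out m c : m \in H -> c \in fixpts e -> exists2 d, d \in fixpts e & (c, d) \in m.
Proof. by move=> /H_conj cj /fix_loop; apply: (conj_out emin cj). Qed.

Lemma H_in m d : m \in H -> d \in fixpts e -> exists2 c, c \in fixpts e & (c, d) \in m.
Proof.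
move=> mH dF; have [nH _ _] := hinvP mH; have [c cF dc] := H_out nH dF.
by exists c => //; apply: H_unflip dc.
Qed.

Lemma H_closed m c' c d d' : m \in H -> (c', c) \in e -> (c, d) \in m -> (d, d') \in e ->
  (c', d') \in m.
Proof. by move/H_conj/conj_closed; apply. Qed.

Lemma H_uniq m c d d' : m \in H -> c \in fixpts e -> d \in fixpts e -> d' \in fixpts e ->
  (c, d) \in m -> (c, d') \in m -> (d, d') \in e.
Proof. by move/H_conj/(conj_uniq emin); apply. Qed.

Lemma H_same_target m c d d' : m \in H -> c \in fixpts e -> d \in fixpts e ->
  d' \in fixpts e -> (c, d) \in m -> (c, d') \in m -> scc e d = scc e d'.
Proof.
move=> mH cF dF d'F cd cd'.
exact (eq_scc ee dF d'F (H_uniq mH cF dF d'F cd cd') (H_uniq mH cF d'F dF cd' cd)).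
Qed.

Lemma H_same_source m c c' d : m \in H -> c \in fixpts e -> c' \in fixpts e ->
  d \in fixpts e -> (c, d) \in m -> (c', d) \in m -> scc e c = scc e c'.
Proof.
move=> mH cF c'F dF cd c'd; have [nH _ _] := hinvP mH.
by apply: (H_same_target nH dF) => //; apply: H_flip.
Qed.

Lemma sandwich_in_H x c d : x \in M -> (c, d) \in x -> c \in fixpts e -> d \in fixpts e ->
  relc e (relc x e) \in H /\ (c, d) \in relc e (relc x e).
Proof.
move=> xM cd cF dF.
have cd' : (c, d) \in relc e (relc x e).
  apply/relcP; exists c; rewrite fix_loop //; split => //.
  by apply/relcP; exists d; rewrite fix_loop.
split => //; apply/(HclassP emin); split.
- by rewrite !relc_in.
- by rewrite -relcA ee.
- by rewrite !relcA ee.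
- exact: rel_neq0 cd'.
Qed.

Lemma gamma_sub m x : x \in gamma M e m -> x.1 \in Gamma e /\ x.2 \in Gamma e.
Proof. by rewrite inE => /and3P[]. Qed.

Lemma gammaE m c d : m \in H -> c \in fixpts e -> d \in fixpts e ->
  ((scc e c, scc e d) \in gamma M e m) = ((c, d) \in m).
Proof.
move=> mH cF dF; rewrite inE /=; apply/idP/idP.
  move=> /and3P[_ _ /existsP[x /andP[+ /existsP[y /andP[+ /andP[xy _]]]]]].
  by rewrite !mem_scc // => /and3P[_ cx _] /and3P[_ _ yd]; apply: H_closed cx xy yd.
move=> cd; rewrite !scc_Gamma //=; apply/existsP; exists c; rewrite scc_self //=.
by apply/existsP; exists d; rewrite scc_self //= cd (H_flip mH cF dF cd).
Qed.

Lemma gamma_perm m : m \in H -> is_perm_rel (Gamma e) (gamma M e m).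
Proof.
move=> mH; have [nH _ _] := hinvP mH; split; first by move=> x /gamma_sub.
  move=> _ /GammaP[c cF ->]; have [d dF cd] := H_out mH cF.
  exists (scc e d); split; first by rewrite gammaE.
  move=> _ /[dup] /gamma_sub /= [_ /GammaP[d' d'F ->]]; rewrite gammaE // => cd'.
  exact: H_same_target mH cF dF d'F cd cd'.
move=> _ /GammaP[d dF ->]; have [c cF cd] := H_in mH dF.
exists (scc e c); split; first by rewrite gammaE.
move=> _ /[dup] /gamma_sub /= [/GammaP[c' c'F ->] _]; rewrite gammaE // => c'd.
exact: H_same_source mH cF c'F dF cd c'd.
Qed.

Lemma gamma_mul m m' : m \in H -> m' \in H ->
  relc (gamma M e m) (gamma M e m') = gamma M e (relc m m').
Proof.
move=> mH m'H; have mm'H := Hmul mH m'H; apply/setP => -[X Y]; apply/idP/idP.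
  move=> /relcP[Z [XZ ZY]]; have [/= /GammaP[c cF EX] /GammaP[z zF EZ]] := gamma_sub XZ.
  have [_ /= /GammaP[d dF EY]] := gamma_sub ZY; subst X Y Z.
  by move: XZ ZY; rewrite !gammaE // => cz zd; apply/relcP; exists z.
move=> XY; have [/= /GammaP[c cF EX] /GammaP[d dF EY]] := gamma_sub XY; subst X Y.
move: XY; rewrite gammaE // => cd; have [z zF cz] := H_out mH cF.
apply/relcP; exists (scc e z); rewrite !gammaE //; split => //.
have [nH _ nm] := hinvP mH; have [_ em' _ _] := HclassP emin _ m'H.
by rewrite -em' -nm relcA; apply/relcP; exists c; rewrite (H_flip mH cF zF cz).
Qed.

(* gamma_e(e) is the identity of Gamma e, by symmetry of e on fixed points. *)
Lemma gamma_id : gamma M e e = [set x | (x.1 \in Gamma e) && (x.1 == x.2)].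
Proof.
apply/setP => -[X Y]; rewrite [in RHS]inE /=; apply/idP/idP.
  move=> XY; have [/= /GammaP[c cF EX] /GammaP[d dF EY]] := gamma_sub XY; subst X Y.
  move: XY; rewrite gammaE ?e_in_H // => cd; rewrite scc_Gamma //=.
  by apply/eqP/(eq_scc ee cF dF cd)/(fix_sym emin cF dF cd).
move=> /andP[/GammaP[c cF ->] /eqP <-]; by rewrite gammaE ?e_in_H ?fix_loop.
Qed.

Lemma Gset_perm_group : perm_group (Gamma e) (Gset M e).
Proof.
split; first by move=> _ /imsetP[m mH ->]; apply: gamma_perm.
  by rewrite -gamma_id; apply/imsetP; exists e => //; apply: e_in_H.
move=> _ _ /imsetP[m mH ->] /imsetP[m' m'H ->]; rewrite gamma_mul //.
by apply/imsetP; exists (relc m m') => //; apply: Hmul.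
Qed.

(* Transitivity of M yields, for fixed points c and d, an element e x e of
   H(e) sending c to d. *)
Lemma Gset_transitive : transitive_pgroup (Gamma e) (Gset M e).
Proof.
move=> _ _ /GammaP[c cF ->] /GammaP[d dF ->]; have [x xM cd] := transM c d.
have [mH cd'] := sandwich_in_H xM cd cF dF.
by exists (gamma M e (relc e (relc x e))); [apply: imset_f | rewrite gammaE].
Qed.

(* Let n = u v be a factorisation through r points, and ex, ye be such that
   t = ex n ye lies in H(e).  Writing t = L R with L = ex u, R = v ye, each
   middle point i is attached to exactly one component of e (the components
   C with c L i for some c in C and i R c' for some fixed c'), and this forces
   n = (n ye) t^-1 (ex n). *)
Section Factorisation.
Variables (n ex ye : {set Q * Q}) (u : {set Q * 'I_r}) (v : {set 'I_r * Q}).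
Hypotheses (nuv : n = relc u v) (tH : relc ex (relc n ye) \in H).
Let L := relc ex u.
Let R := relc v ye.

Lemma tLR : relc ex (relc n ye) = relc L R.
Proof. by rewrite /L /R nuv !relcA. Qed.

Definition attached (C : {set Q}) (i : 'I_r) : bool :=
  [exists c in C, (c, i) \in L] && [exists c' in fixpts e, (i, c') \in R].

(* Every component has an attached point, since t maps it somewhere ... *)
Lemma attached_exists C : C \in Gamma e -> exists i, attached C i.
Proof.
move=> /GammaP[c cF ->]; have [d dF] := H_out tH cF; rewrite tLR => /relcP[i [ci id]].
exists i; apply/andP; split; apply/existsP; [exists c | exists d]; by rewrite ?scc_self ?ci ?dF.
Qed.

Lemma attached_uniq C C' i : C \in Gamma e -> C' \in Gamma e ->
  attached C i -> attached C' i -> C = C'.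
Proof.
move=> CG C'G /andP[/existsP[c /andP[cC ci]] /existsP[d /andP[dF id]]].
move=> /andP[/existsP[c' /andP[c'C c'i]] _].
have [cF ->] := mem_Gamma ee CG cC; have [c'F ->] := mem_Gamma ee C'G c'C.
apply: (H_same_source tH cF c'F dF); rewrite tLR; apply/relcP; by [exists i | exists i].
Qed.

(* Counting: r components with pairwise different attached points exhaust
   the r middle points. *)
Definition attach (C : {set Q}) : option 'I_r := [pick i | attached C i].

Lemma attach_onto i : exists2 C, C \in Gamma e & attach C = Some i /\ attached C i.
Proof.
have attachP C : C \in Gamma e -> exists j, attach C = Some j /\ attached C j.
  move=> CG; rewrite /attach; case: pickP => [j Cj|none]; first by exists j.
  by have [j] := attached_exists CG; rewrite none.
have inj : {in Gamma e &, injective attach}.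
  move=> C C' CG C'G; have [j [-> Cj]] := attachP C CG; have [j' [-> C'j']] := attachP C' C'G.
  by case=> jj'; subst j'; apply: attached_uniq Cj C'j'.
have sub : attach @: Gamma e \subset Some @: [set: 'I_r].
  by apply/subsetP => _ /imsetP[C CG ->]; have [j [-> _]] := attachP C CG; apply: imset_f.
have : attach @: Gamma e == Some @: [set: 'I_r].
  rewrite eqEcard sub (card_in_imset inj) card_Gamma //= card_imset; last by move=> ? ? [].
  by rewrite cardsT card_ord.
move=> /eqP img; have : Some i \in attach @: Gamma e by rewrite img imset_f ?inE.
move=> /imsetP[C CG CE]; exists C => //; have [j [Ej Cj]] := attachP C CG.
by move: CE; rewrite Ej => -[->].
Qed.

Local Notation t := (relc ex (relc n ye)).

(* An arrow a u i v b of n is rerouted through the component attached to i. *)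
Lemma sandwich_contains : n \subset relc (relc n ye) (relc (hinv M e t) (relc ex n)).
Proof.
have nLR a b i : (a, i) \in u -> (i, b) \in v -> (a, b) \in n.
  by move=> ai ib; rewrite nuv; apply/relcP; exists i.
apply/subsetP => -[a b]; rewrite {1}nuv => /relcP[i [ai ib]].
have [C CG [_ /andP[/existsP[c /andP[cC ci]] /existsP[c' /andP[c'F ic']]]]] := attach_onto i.
move: ci ic' => /relcP[p [cp pi]] /relcP[q [iq qc']]; have [cF _] := mem_Gamma ee CG cC.
have cc' : (c, c') \in t.
  by rewrite tLR; apply/relcP; exists i; split; apply/relcP; [exists p | exists q].
apply/relcP; exists c'; split; first by apply/relcP; exists q; rewrite (nLR _ _ i).
apply/relcP; exists c; rewrite (H_flip tH cF c'F cc'); split => //.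
by apply/relcP; exists p; rewrite (nLR _ _ i).
Qed.

(* An arrow of (n ye) t^-1 (ex n) enters n through a middle point i and
   leaves it through a middle point j; t links the components attached to i
   and to j, so these coincide and i = j. *)
Lemma sandwich_within : relc (relc n ye) (relc (hinv M e t) (relc ex n)) \subset n.
Proof.
have [_ tti _] := hinvP tH; have [_ et _ _] := HclassP emin _ tH.
apply/subsetP => -[a b] /relcP[z1 [az1 /relcP[z2 [z1z2 z2b]]]]; rewrite nuv.
move: az1 z2b; rewrite nuv !relcA -/R -[relc ex (relc u v)]relcA -/L.
move=> /relcP[i [ai iz1]] /relcP[j [z2j jb]]; apply/relcP; exists i; split => //.
have [C CG [Ci /andP[/existsP[c /andP[cC ci]] _]]] := attach_onto i.
have [C' C'G [C'j /andP[/existsP[d /andP[dC' dj]] /existsP[d' /andP[d'F jd']]]]] :=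
  attach_onto j.
have [cF CE] := mem_Gamma ee CG cC; have [dF C'E] := mem_Gamma ee C'G dC'.
have cd' : (c, d') \in t.
  rewrite -et -tti relcA; apply/relcP; exists z1; split.
    by rewrite tLR; apply/relcP; exists i.
  by apply/relcP; exists z2; split => //; rewrite tLR; apply/relcP; exists j.
have dd' : (d, d') \in t by rewrite tLR; apply/relcP; exists j.
have CC' : C = C' by rewrite CE C'E; apply: H_same_source tH cF dF d'F cd' dd'.
by move: Ci; rewrite CC' C'j => -[<-].
Qed.

Lemma relc_inverse_sandwich : n = relc (relc n ye) (relc (hinv M e t) (relc ex n)).
Proof. by apply/eqP; rewrite eqEsubset sandwich_contains sandwich_within. Qed.

End Factorisation.

Lemma min_rank_sandwich n : n \in M -> rank n = r -> exists x y,
  let t := relc (relc e x) (relc n (relc y e)) in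
  [/\ x \in M, y \in M, t \in H &
      n = relc (relc n (relc y e)) (relc (hinv M e t) (relc (relc e x) n))].
Proof.
move=> nM nr; have /set0Pn[[p q] pq] := minrank_neq0 nr.
have /set0Pn[[a b] ab] := minrank_neq0 er; have [c [cF _ _]] := idem_factor ee ab.
have [x xM cp] := transM c p; have [y yM qc] := transM q c.
have cc : (c, c) \in relc x (relc n y).
  by apply/relcP; exists p; split => //; apply/relcP; exists q.
have [tH _] := sandwich_in_H (relc_in xM (relc_in nM yM)) cc cF cF.
have tE : relc e (relc (relc x (relc n y)) e) = relc (relc e x) (relc n (relc y e)).
  by rewrite !relcA.
rewrite tE in tH; exists x, y; split => //.
move: (rank_leP n); rewrite nr => /existsP[u /existsP[v /eqP nuv]].
exact: relc_inverse_sandwich nuv tH.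
Qed.

Lemma Kset_Dclass : Kset M = [set n in M | Drel M e n].
Proof.
apply/setP => n; rewrite !inE; case nM: (n \in M) => //=; apply/idP/idP.
  move/eqP => /(min_rank_sandwich nM)[x [y /= [xM yM tH nE]]].
  set t := relc (relc e x) _ in tH nE; have [tiH _ tit] := hinvP tH.
  have [tiM _ _ _] := HclassP emin _ tiH.
  apply/existsP; exists (relc n (relc y e)); rewrite !relc_in //= /Lrel /Rrel.
  apply/andP; split; apply/existsP.
    exists (relc (hinv M e t) (relc e x)); rewrite !relc_in //=.
    apply/existsP; exists (relc n y); rewrite !relc_in //=.
    by rewrite relcA -/t tit -relcA !eqxx.
  exists (relc y e); rewrite !relc_in //= eqxx /=.
  apply/existsP; exists (relc (hinv M e t) (relc (relc e x) n)).
  by rewrite -nE eqxx andbT !relc_in.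
by move=> /Drel_rank ->; rewrite er.
Qed.

Lemma min_idem_conjugates f : min_idem f ->
  exists a b, [/\ a \in M, b \in M & conjugates e f a b].
Proof.
case=> ff fM fr; have [x [y /= [xM yM tH fE]]] := min_rank_sandwich fM fr.
set t := relc _ _ in tH fE; have [tiH tti _] := hinvP tH.
set ti := hinv M e t in tiH tti fE; have [tiM _ tie _] := HclassP emin _ tiH.
exists (relc (relc e x) f), (relc f (relc (relc y e) ti)).
split; [by rewrite !relc_in | by rewrite !relc_in |split].
- by rewrite relcA ff.
- by rewrite !relcA tie.
- by rewrite -[RHS]tti /t !relcA -[relc f (relc f _)]relcA ff.
- by rewrite [RHS]fE !relcA.
Qed.

Section Stabiliser.
Variable i : Q.
Hypothesis iF : i \in fixpts e.
Local Notation S := [set s in H | (i, i) \in s].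

Definition pre_scc (m : {set Q * Q}) : {set Q} :=
  scc e (odflt i [pick c | (c \in fixpts e) && ((c, i) \in m)]).

Lemma pre_sccE m c : m \in H -> c \in fixpts e -> (c, i) \in m -> pre_scc m = scc e c.
Proof.
move=> mH cF ci; rewrite /pre_scc; case: pickP => [c' /andP[c'F c'i] | none] /=.
  exact: H_same_source mH c'F cF iF c'i ci.
by move: (none c); rewrite cF ci.
Qed.

Lemma stab_mul s s' : s \in S -> s' \in S -> relc s s' \in S.
Proof.
move=> /setIdP[sH sii] /setIdP[s'H s'ii]; rewrite inE Hmul //.
by apply/relcP; exists i.
Qed.

Lemma stab_inv s : s \in S -> hinv M e s \in S.
Proof. by move=> /setIdP[sH sii]; have [nH _ _] := hinvP sH; rewrite inE nH H_flip. Qed.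

Lemma stab_pre m m' : m \in H -> m' \in H ->
  (relc (hinv M e m) m' \in S) = (pre_scc m == pre_scc m').
Proof.
move=> mH m'H; have [nH mn _] := hinvP mH; have [_ em' _ _] := HclassP emin _ m'H.
have [c cF ci] := H_in mH iF; have [c' c'F c'i] := H_in m'H iF.
rewrite (pre_sccE mH cF ci) (pre_sccE m'H c'F c'i) inE Hmul //=; apply/idP/eqP.
  move=> iim; have cim' : (c, i) \in m'.
    by rewrite -em' -mn relcA; apply/relcP; exists i.
  exact: H_same_source m'H cF c'F iF cim' c'i.
move=> /(eq_sccE ee cF c'F)[cc' _]; have cim' := H_closed m'H cc' c'i (fix_loop iF).
by apply/relcP; exists c; rewrite (H_flip mH cF iF ci).
Qed.

Lemma coset_eq m m' : m \in H -> m' \in H ->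
  ([set relc m s | s in S] == [set relc m' s | s in S]) = (relc (hinv M e m) m' \in S).
Proof.
move=> mH m'H; have [nH mn nm] := hinvP mH; have [_ em' _ _] := HclassP emin _ m'H.
have eS : e \in S by rewrite inE e_in_H fix_loop.
apply/eqP/idP => [cosets|s0S].
  have : m' \in [set relc m s | s in S].
    by rewrite cosets; apply/imsetP; exists e => //; have [_ _ -> _] := HclassP emin _ m'H.
  move=> /imsetP[s sS ->]; have [_ es _ _] := HclassP emin _ (proj1 (setIdP sS)).
  by rewrite -relcA nm es.
set s0 := relc (hinv M e m) m' in s0S.
have m'E : m' = relc m s0 by rewrite /s0 -relcA mn em'.
have [s0iH s0s0i _] := hinvP (proj1 (setIdP s0S)).
apply/setP => x; apply/imsetP/imsetP => -[s sS ->]; last first.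
  by exists (relc s0 s); [apply: stab_mul | rewrite m'E relcA].
exists (relc (hinv M e s0) s); first by apply: stab_mul => //; apply: stab_inv.
have [_ es _ _] := HclassP emin _ (proj1 (setIdP sS)).
by rewrite m'E relcA -[relc s0 _]relcA s0s0i es.
Qed.

End Stabiliser.

(* The cosets of the stabiliser of i are in bijection with Gamma e. *)
Lemma index_stab i : i \in fixpts e -> r = index_in H [set m in H | (i, i) \in m].
Proof.
move=> iF; rewrite /index_in -(card_Gamma emin) (card_imset_kernel (f2 := pre_scc i)); last first.
  by move=> m m' mH m'H; rewrite coset_eq // stab_pre.
apply: eq_card => C; apply/idP/imsetP => [/GammaP[c cF ->]|[m mH ->]].
  have [x xM ci] := transM c i; have [mH cim] := sandwich_in_H xM ci cF iF.
  by exists (relc e (relc x e)) => //; rewrite (pre_sccE iF mH cF cim).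
by have [c cF ci] := H_in mH iF; rewrite (pre_sccE iF mH cF ci) scc_Gamma.
Qed.

End HGroup.

(* Conjugating data a, b between minimal idempotents e and f transport the
   components of e onto those of f, and H(e) onto H(f) by m |-> b m a. *)
Section Transport.
Variables e f a b : {set Q * Q}.
Hypotheses (emin : min_idem e) (fmin : min_idem f) (cj : conjugates e f a b).
Hypotheses (aM : a \in M) (bM : b \in M).

Definition theta (C : {set Q}) : {set Q} :=
  [set d in fixpts f | [exists c in C, (c, d) \in a]].

Lemma thetaE c d : c \in fixpts e -> d \in fixpts f -> (c, d) \in a ->
  theta (scc e c) = scc f d.
Proof.
move=> cF dF cd; have [[ee _ _] [ff _ _]] := (emin, fmin).
apply/setP => d'; rewrite inE mem_scc //.
case d'F: (d' \in fixpts f) => //=; apply/existsP/andP.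
  move=> [c' /andP[]]; rewrite mem_scc // => /and3P[c'F cc' _] c'd'.
  have cd' := conj_closed cj cc' c'd' (fix_loop d'F).
  by rewrite (conj_uniq emin cj cF dF d'F cd cd') (conj_uniq emin cj cF d'F dF cd' cd).
by move=> [dd' _]; exists c; rewrite scc_self //= (conj_closed cj (fix_loop cF) cd dd').
Qed.

Lemma theta_Gamma : theta @: Gamma e = Gamma f.
Proof.
have cj' := conjugates_sym cj.
apply/setP => X; apply/imsetP/GammaP => [[_ /GammaP[c cF ->] ->]|[d dF ->]].
  by have [d dF cd] := conj_out fmin cj (fix_loop cF); exists d; rewrite // (thetaE cF dF cd).
have [c cF dc] := conj_out emin cj' (fix_loop dF).
by exists (scc e c); rewrite ?scc_Gamma // (thetaE cF dF (conj_flip fmin cj' dF cF dc)).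
Qed.

Lemma theta_inj : {in Gamma e &, injective theta}.
Proof.
have [[ee _ _] [ff _ _]] := (emin, fmin); have cj' := conjugates_sym cj.
move=> _ _ /GammaP[c cF ->] /GammaP[c' c'F ->].
have [d dF cd] := conj_out fmin cj (fix_loop cF).
have [d' d'F c'd'] := conj_out fmin cj (fix_loop c'F).
rewrite (thetaE cF dF cd) (thetaE c'F d'F c'd') => /(eq_sccE ff dF d'F)[dd' d'd].
have dc := conj_flip emin cj cF dF cd; have d'c' := conj_flip emin cj c'F d'F c'd'.
have dc' := conj_closed cj' dd' d'c' (fix_loop c'F).
have d'c := conj_closed cj' d'd dc (fix_loop cF).
exact (eq_scc ee cF c'F (conj_uniq fmin cj' dF cF c'F dc dc')
                        (conj_uniq fmin cj' d'F c'F cF d'c' d'c)).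
Qed.

(* m |-> b m a sends H(e) into H(f); the inverse map is n |-> a n b. *)
Lemma conj_H m : m \in Hclass M e -> relc b (relc m a) \in Hclass M f.
Proof.
move=> /(HclassP emin)[mM em me m0]; have [af be ab ba] := cj.
have mE : m = relc a (relc (relc b (relc m a)) b).
  by rewrite !relcA ab me -relcA ab em.
apply/(HclassP fmin); split.
- by rewrite !relc_in.
- by rewrite -relcA (conj_right cj).
- by rewrite !relcA af.
- by apply: contraNneq m0 => bma0; rewrite mE bma0 relc0m relcm0.
Qed.

Lemma conj_H_cancel n : n \in Hclass M f -> relc b (relc (relc a (relc n b)) a) = n.
Proof.
move=> /(HclassP fmin)[_ fn nf _]; have [_ _ _ ba] := cj.
by rewrite !relcA ba nf -relcA ba fn.
Qed.

Lemma relabel_gamma m : m \in Hclass M e ->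
  relabel theta (gamma M e m) = gamma M f (relc b (relc m a)).
Proof.
move=> mH; have m'H := conj_H mH; have [_ em me _] := HclassP emin _ mH.
have cj' := conjugates_sym cj.
have [af be ab ba] := cj; have gon : rel_on (Gamma e) (gamma M e m) by move=> x /gamma_sub.
apply/setP => -[X Y].
have [/andP[/GammaP[d dF ->] /GammaP[d' d'F ->]]|XYG] := boolP ((X \in Gamma f) && (Y \in Gamma f)).
  have [c cF dc] := conj_out emin cj' (fix_loop dF); have cd := conj_flip fmin cj' dF cF dc.
  have [c' c'F d'c'] := conj_out emin cj' (fix_loop d'F).
  have c'd' := conj_flip fmin cj' d'F c'F d'c'.
  rewrite (gammaE fmin m'H dF d'F) -(thetaE cF dF cd) -(thetaE c'F d'F c'd').
  rewrite (mem_relabel theta_inj gon (scc_Gamma cF) (scc_Gamma c'F)) (gammaE emin mH cF c'F).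
  apply/idP/idP => [cc'|dd'].
    by apply/relcP; exists c; split => //; apply/relcP; exists c'.
  rewrite -em -me -ab !relcA; apply/relcP; exists d; split => //.
  have -> : relc b (relc m (relc a b)) = relc (relc b (relc m a)) b by rewrite !relcA.
  by apply/relcP; exists d'.
apply/idP/idP => [/(relabel_on gon)|/gamma_sub]; rewrite ?theta_Gamma /= => -[XG YG];
  by rewrite XG YG in XYG.
Qed.

End Transport.

Lemma Gset_equiv e f a b : min_idem e -> min_idem f -> conjugates e f a b -> a \in M ->
  b \in M -> equiv_pgroups (Gamma e) (Gset M e) (Gamma f) (Gset M f).
Proof.
move=> emin fmin cj aM bM; have cj' := conjugates_sym cj.
have gon m : rel_on (Gamma e) (gamma M e m) by move=> x /gamma_sub.
have inj := theta_inj emin fmin cj.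
exists (theta f a), (relabel (theta f a)); split.
- exact: inj.
- exact: theta_Gamma emin fmin cj.
- split.
    move=> _ _ /imsetP[m _ ->] /imsetP[m' _ ->].
    exact (relabel_inj inj (gon m) (gon m')).
  apply/setP => g; apply/imsetP/imsetP => [[_ /imsetP[m mH ->] ->]|[n nH ->]].
    exists (relc b (relc m a)); first exact (conj_H emin fmin cj aM bM mH).
    exact (relabel_gamma emin fmin cj aM bM mH).
  have mH := conj_H fmin emin cj' bM aM nH.
  exists (gamma M e (relc a (relc n b))); first exact: imset_f.
  by rewrite (relabel_gamma emin fmin cj aM bM mH) (conj_H_cancel fmin cj nH).
- by move=> _ _ /imsetP[m _ ->] /imsetP[m' _ ->]; exact (relabel_relc inj (gon m) (gon m')).
- by move=> _ s t /imsetP[m _ ->] sG tG; rewrite (mem_relabel inj (gon m) sG tG).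
Qed.

(* Some power of an element m x of minimal rank, with x closing a loop of m,
   is a minimal idempotent. *)
Lemma min_idem_exists : exists e, min_idem e.
Proof.
have [m [mM m0 mr]] := minrank_attained; have /set0Pn[[p q] pq] := m0.
have [x xM qp] := transM q p; set y := relc m x.
have yM : y \in M by apply: relc_in.
have pp : (p, p) \in y by apply/relcP; exists q.
have [k idem] := pw_idem y; exists (pw y k.+1); split => //; first exact: pw_in.
apply/eqP; rewrite eqn_leq minrank_le ?pw_in ?(rel_neq0 (pw_loop _ pp)) // andbT.
by rewrite -mr pwS /y relcA rank_relc_l.
Qed.

Lemma Kset_regular : regular_Dclass M (Kset M).
Proof.
have [e emin] := min_idem_exists; have [ee eM er] := emin.
split; first by exists e => //; rewrite (Kset_Dclass emin).
by exists e; rewrite ?inE ?eM ?er ?eqxx //; apply/eqP.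
Qed.

End Monoid.

Theorem mainTheorem10 (Q : finType) (M : {set {set Q * Q}}) :
  0 < #|Q| -> is_rel_monoid M -> transitive_relmon M ->
  [/\ regular_Dclass M (Kset M),
      (forall e, e \in Kset M -> idem_rel e ->
         perm_group (Gamma e) (Gset M e) /\ transitive_pgroup (Gamma e) (Gset M e)),
      (forall e f, e \in Kset M -> idem_rel e -> f \in Kset M -> idem_rel f ->
         equiv_pgroups (Gamma e) (Gset M e) (Gamma f) (Gset M f))
    & (forall e i, e \in Kset M -> idem_rel e -> (i, i) \in e ->
         minrank M = index_in (Hclass M e) [set m in Hclass M e | (i, i) \in m])].
Proof.
move=> Q_gt0 monoidM transM.
have Kmin e : e \in Kset M -> idem_rel e -> min_idem M e.
  by rewrite inE => /andP[eM /eqP er] /eqP ee.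
split.
- exact: Kset_regular.
- move=> e eK /(Kmin e eK) emin.
  by split; [apply: Gset_perm_group | apply: Gset_transitive].
- move=> e f eK /(Kmin e eK) emin fK /(Kmin f fK) fmin.
  have [a [b [aM bM cj]]] := min_idem_conjugates Q_gt0 monoidM transM emin fmin.
  exact (Gset_equiv Q_gt0 monoidM transM emin fmin cj aM bM).
- move=> e i eK /(Kmin e eK) emin ii.
  by apply: (index_stab Q_gt0 monoidM transM emin); rewrite inE.
Qed.
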